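(* Let $I=I_{\mathbf a,\mathbf b}\subset S=K[x,y]$ be a nonzero monomial ideal. Then: (a) if $a_m>0$, then $\mathrm{v}_{\mathfrak{p}_x}(I^k)=k(a_m+b_m)-1$ for all $k\ge1$; (b) if $b_1>0$, then $\mathrm{v}_{\mathfrak{p}_y}(I^k)=k(a_1+b_1)-1$ for all $k\ge1$.
   Context: $S=K[x,y]$ over a field $K$, standard graded, $S_d$ its degree-$d$ component. Every nonzero monomial ideal $I$ of $S$ has minimal monomial generating set $\{x^{a_1}y^{b_1},\dots,x^{a_m}y^{b_m}\}$ with $a_1>\dots>a_m\ge0$ and $0\le b_1<\dots<b_m$; this is denoted $I=I_{\mathbf a,\mathbf b}$. $\mathfrak{p}_x=(x)$, $\mathfrak{p}_y=(y)$. For a graded ideal $J$ and $\mathfrak{p}\in\operatorname{Ass}(J)$, $\mathrm{v}_\mathfrak{p}(J)=\min\{d:\exists f\in S_d \text{ with } (J:f)=\mathfrak{p}\}$. *)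

From mathcomp Require Import all_boot all_order all_algebra.
From mathcomp.multinomials Require Export mpoly.
Set Implicit Arguments. Unset Strict Implicit. Unset Printing Implicit Defensive.
Import GRing.Theory.
Local Open Scope ring_scope.

Section Defs.
Variable K : fieldType.
Local Notation S := {mpoly K[2]}.

Definition varx : S := 'X_(@Ordinal 2 0 isT).
Definition vary : S := 'X_(@Ordinal 2 1 isT).

Definition xymon (a b : nat) : S := varx ^+ a * vary ^+ b.

Definition subsetS := S -> Prop.

Definition ideal_gen (G : subsetS) : subsetS :=
  fun f => exists s : seq (S * S),
    (forall p, p \in s -> G p.2) /\ f = \sum_(p <- s) p.1 * p.2.

Definition ideal_pow (J : subsetS) (k : nat) : subsetS :=
  ideal_gen (fun g => exists gs : seq S,
    size gs = k /\ (forall h, h \in gs -> J h) /\ g = \prod_(h <- gs) h).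

Definition colon (J : subsetS) (f : S) : subsetS := fun g => J (g * f).

Definition same_set (A B : subsetS) : Prop := forall g, A g <-> B g.

Definition px : subsetS := ideal_gen (fun g => g = varx).
Definition py : subsetS := ideal_gen (fun g => g = vary).

(* S_d : homogeneous polynomials of degree d (standard grading; 0 included). *)
Definition in_Sd (d : nat) (f : S) : Prop := f \is d.-homog.

(* v_p(J) = d : d is the minimum of { d | exists f in S_d with (J : f) = p }
   (in particular this set is nonempty, so p in Ass(J)). *)
Definition is_vnumber (J p : subsetS) (d : nat) : Prop :=
  (exists f, in_Sd d f /\ same_set (colon J f) p) /\
  (forall d' f, in_Sd d' f -> same_set (colon J f) p -> (d <= d')%N).

Definition mon_ideal (a b : seq nat) : subsetS :=
  ideal_gen (fun g => exists2 i, (i < size a)%N & g = xymon (nth 0%N a i) (nth 0%N b i)).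

Definition admissible (a b : seq nat) : Prop :=
  (0 < size a)%N /\ size a = size b /\ sorted gtn a /\ sorted ltn b.

End Defs.

From mathcomp Require Import all_boot all_order all_algebra.
From mathcomp.multinomials Require Import mpoly.
From mathcomp Require Import zify.
Set Implicit Arguments. Unset Strict Implicit. Unset Printing Implicit Defensive.
Import GRing.Theory.
Local Open Scope ring_scope.

(* Write x for the variable of p = (x), y for the other one, and let x^A y^B be
   the generator of I with least x-degree (for (a); with the roles of x and y
   exchanged for (b)).  Every generator x^c y^d of I satisfies
   (c, d) >= (A, B) lexicographically, a condition stable under products, so
   every monomial x^c y^d of I^k has (c, d) >= (kA, kB) lexicographically.
   Hence g x^(kA-1) y^(kB) lies in I^k iff every monomial of g has positive
   x-degree, i.e. (I^k : x^(kA-1) y^(kB)) = (x).  Conversely, if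
   (I^k : f) = (x) then x f lies in I^k while y^(kB) f does not, so some
   monomial x^c y^d of f has c < kA, while x^(c+1) y^d must be lexicographically
   above (kA, kB): thus c = kA - 1, d >= kB and deg f >= k(A + B) - 1. *)

Section TwoVariables.
Variable K : fieldType.
Local Notation S := {mpoly K[2]}.
Local Notation M := 'X_{1..2}.

Variables (j j' : 'I_2).
Hypothesis neq_jj' : j != j'.

Lemma ord2_cases (i : 'I_2) : i = j \/ i = j'.
Proof.
case: i j j' neq_jj' => [[|[|i]] Hi] [[|[|x]] Hx] [[|[|y]] Hy] //= _;
  try (left; exact: val_inj); try (right; exact: val_inj).
Qed.

Lemma mdeg_ord2 (m : M) : mdeg m = (m j + m j')%N.
Proof.
rewrite mdegE big_ord_recr big_ord_recr big_ord0 /= add0n.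
case: j j' neq_jj' => [[|[|x]] Hx] [[|[|y]] Hy] //= _.
- by congr (m _ + m _)%N; apply: val_inj.
- by rewrite addnC; congr (m _ + m _)%N; apply: val_inj.
Qed.

Lemma mnm_le_ord2 (e m : M) : (e j <= m j)%N -> (e j' <= m j')%N -> (e <= m)%MM.
Proof. by move=> le_j le_j'; apply/mnm_lepP => i; case: (ord2_cases i) => ->. Qed.

Lemma mnm1_jj' : U_(j)%MM j' = 0%N.
Proof. by rewrite mnm1E (negbTE neq_jj'). Qed.

Lemma mnm1_j'j : U_(j')%MM j = 0%N.
Proof. by rewrite mnm1E eq_sym (negbTE neq_jj'). Qed.

Definition lex_above (A B k : nat) (m : M) : bool :=
  ((k * A)%N < m j)%N || (((k * A)%N == m j) && ((k * B)%N <= m j')%N).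

Lemma lex_above0 A B m : lex_above A B 0 m.
Proof. rewrite /lex_above; lia. Qed.

Lemma lex_aboveD A B k1 k2 m1 m2 :
  lex_above A B k1 m1 -> lex_above A B k2 m2 -> lex_above A B (k1 + k2) (m1 + m2)%MM.
Proof. rewrite /lex_above !mnmDE mulnDl; lia. Qed.

Definition supp_lex_above A B k (g : S) := forall m, m \in msupp g -> lex_above A B k m.

Lemma supp_lex_aboveX A B k m : supp_lex_above A B k 'X_[m] <-> lex_above A B k m.
Proof.
split; first by apply; rewrite msuppX mem_head.
by move=> Hm m'; rewrite msuppX inE => /eqP ->.
Qed.

Lemma supp_lex_aboveM A B k1 k2 p q :
  supp_lex_above A B k1 p -> supp_lex_above A B k2 q ->
  supp_lex_above A B (k1 + k2) (p * q).
Proof.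
move=> Hp Hq m /msuppM_le /allpairsP [[m1 m2] [/= H1 H2 ->]].
exact: lex_aboveD (Hp _ H1) (Hq _ H2).
Qed.

Lemma supp_lex_above_sum A B k (T : eqType) (r : seq T) (F : T -> S) :
  (forall t, t \in r -> supp_lex_above A B k (F t)) ->
  supp_lex_above A B k (\sum_(t <- r) F t).
Proof.
elim: r => [|t r IH] HF; first by rewrite big_nil => m; rewrite msupp0.
rewrite big_cons => m /msuppD_le; rewrite mem_cat => /orP [] Hm.
  by apply: (HF t) => //; rewrite mem_head.
by apply: IH Hm => t' Ht'; apply: HF; rewrite inE Ht' orbT.
Qed.

Lemma supp_lex_above_prod A B (gs : seq S) :
  (forall h, h \in gs -> supp_lex_above A B 1 h) ->
  supp_lex_above A B (size gs) (\prod_(h <- gs) h).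
Proof.
elim: gs => [|h gs IH] Hgs.
  by rewrite big_nil => m; rewrite msupp1 inE => /eqP ->; apply: lex_above0.
rewrite big_cons /= -add1n; apply: supp_lex_aboveM.
  by apply: Hgs; rewrite mem_head.
by apply: IH => h' Hh'; apply: Hgs; rewrite inE Hh' orbT.
Qed.

Lemma supp_lex_above_ideal_gen A B k (G : subsetS K) f :
  (forall g, G g -> supp_lex_above A B k g) -> ideal_gen G f -> supp_lex_above A B k f.
Proof.
move=> HG [s [Hs ->]]; apply: supp_lex_above_sum => p Hp.
rewrite -[k]add0n; apply: supp_lex_aboveM; last exact: HG (Hs _ Hp).
by move=> m _; apply: lex_above0.
Qed.

Lemma supp_lex_above_ideal_pow A B k (G : subsetS K) f :
  (forall g, G g -> supp_lex_above A B 1 g) ->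
  ideal_pow (ideal_gen G) k f -> supp_lex_above A B k f.
Proof.
move=> HG; apply: supp_lex_above_ideal_gen => g [gs [<- [Hgs ->]]].
by apply: supp_lex_above_prod => h /Hgs; apply: supp_lex_above_ideal_gen.
Qed.

Lemma ideal_gen_divisible (G : subsetS K) (e : M) (g : S) :
  G 'X_[e] -> (forall m, m \in msupp g -> (e <= m)%MM) -> ideal_gen G g.
Proof.
move=> Ge Hg; exists [seq (g@_m *: 'X_[m - e], 'X_[e]) | m <- msupp g]; split.
  by move=> p /mapP [m _ ->].
rewrite big_map {1}(mpolyE g) big_seq [RHS]big_seq; apply: eq_bigr => m Hm.
by rewrite -scalerAl -mpolyXD submK // Hg.
Qed.

Lemma ideal_pow_divisible (G : subsetS K) (e : M) k (g : S) :
  G 'X_[e] -> (forall m, m \in msupp g -> (e *+ k <= m)%MM) ->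
  ideal_pow (ideal_gen G) k g.
Proof.
move=> Ge; apply: ideal_gen_divisible; exists (nseq k 'X_[e]).
split; first by rewrite size_nseq.
split; last by rewrite big_nseq iter_mulr_1 mpolyXn.
move=> h /nseqP [-> _]; exists [:: (1, 'X_[e])]; split.
  by move=> p; rewrite inE => /eqP ->.
by rewrite big_seq1 mul1r.
Qed.

Lemma mem_ideal_var (g : S) :
  ideal_gen (fun h => h = 'X_j) g <-> forall m, m \in msupp g -> (0 < m j)%N.
Proof.
split=> [Hg m Hm|Hg]; last first.
  apply: (@ideal_gen_divisible _ U_(j)%MM) => // m /Hg mj_gt0.
  by apply: mnm_le_ord2; rewrite ?mnm1_jj' // mnm1E eqxx.
have /(_ m Hm) : supp_lex_above 1 0 1 g.
  apply: supp_lex_above_ideal_gen Hg => h ->; apply/supp_lex_aboveX.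
  by rewrite /lex_above mnm1E eqxx mnm1_jj'.
by rewrite /lex_above; lia.
Qed.

Variables (G : subsetS K) (A B : nat) (e : M).
Hypothesis G_lex_above : forall g, G g -> supp_lex_above A B 1 g.
Hypothesis G_Xe : G 'X_[e].
Hypotheses (e_j : e j = A) (e_j' : e j' = B).
Hypothesis A_gt0 : (0 < A)%N.

Local Notation Ik k := (ideal_pow (ideal_gen G) k).
Local Notation pvar := (ideal_gen (fun h => h = 'X_j)).

Lemma colon_ideal_pow_witness k : (1 <= k)%N ->
  let w := (e *+ k - U_(j))%MM in
  [/\ w j = (k * A - 1)%N, w j' = (k * B)%N & same_set (colon (Ik k) 'X_[w]) pvar].
Proof.
move=> k_gt0 w.
have w_j : w j = (k * A - 1)%N by rewrite mnmBE mulmnE mnm1E eqxx e_j mulnC.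
have w_j' : w j' = (k * B)%N by rewrite mnmBE mulmnE mnm1_jj' e_j' subn0 mulnC.
split=> // g; split=> [/(supp_lex_above_ideal_pow G_lex_above) Hgw|].
  apply/mem_ideal_var => m Hm.
  have /Hgw : (w + m)%MM \in msupp (g * 'X_[w]).
    by rewrite mcoeff_msupp mcoeffMX -mcoeff_msupp.
  rewrite /lex_above mnmDE w_j; lia.
move/mem_ideal_var => Hg; apply: (ideal_pow_divisible G_Xe) => m.
rewrite (perm_mem (msuppMX _ _)) => /mapP [m' /Hg m'_j ->].
by apply: mnm_le_ord2; rewrite mnmDE mulmnE ?w_j ?w_j' ?e_j ?e_j'; lia.
Qed.

Lemma colon_ideal_pow_deg k d f : (1 <= k)%N ->
  in_Sd d f -> same_set (colon (Ik k) f) pvar -> (k * (A + B) - 1 <= d)%N.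
Proof.
move=> k_gt0 f_hom Hcol.
have Hxf : supp_lex_above A B k (f * 'X_[U_(j)]).
  apply: (supp_lex_above_ideal_pow G_lex_above); rewrite mulrC; apply/Hcol.
  by apply/mem_ideal_var => m; rewrite msuppX inE => /eqP ->; rewrite mnm1E eqxx.
have Hyf : ~ Ik k ('X_[U_(j') *+ (k * B)] * f).
  move=> /Hcol /mem_ideal_var /(_ (U_(j') *+ (k * B))%MM).
  by rewrite msuppX mem_head mulmnE mnm1_j'j => /(_ isT).
have [u u_supp u_j] : exists2 u, u \in msupp f & (u j < k * A)%N.
  apply/hasP; apply: contra_notT Hyf => /hasPn Hf; rewrite mulrC.
  apply: (ideal_pow_divisible G_Xe) => m.
  rewrite (perm_mem (msuppMX _ _)) => /mapP [m' /Hf /= m'_j ->].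
  by apply: mnm_le_ord2; rewrite mnmDE !mulmnE ?mnm1_j'j ?mnm1E ?eqxx ?e_j ?e_j'; lia.
have : (U_(j) + u)%MM \in msupp (f * 'X_[U_(j)]).
  by rewrite mcoeff_msupp mcoeffMX -mcoeff_msupp.
move=> /Hxf; rewrite /lex_above !mnmDE mnm1E eqxx mnm1_jj' => Hu.
have <- : mdeg u = d by exact: (dhomog_mf f_hom u_supp).
rewrite mdeg_ord2; lia.
Qed.

Lemma vnumber_ideal_pow k : (1 <= k)%N -> is_vnumber (Ik k) pvar (k * (A + B) - 1).
Proof.
move=> k_gt0; split; last by move=> d f; apply: colon_ideal_pow_deg.
have [w_j w_j' Hcol] := colon_ideal_pow_witness k_gt0.
exists 'X_[(e *+ k - U_(j))%MM]; split=> //.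
by rewrite /in_Sd dhomogX; apply/eqP; rewrite /= mdeg_ord2 w_j w_j'; lia.
Qed.

End TwoVariables.

Local Close Scope ring_scope.

Definition ordx : 'I_2 := @Ordinal 2 0 isT.
Definition ordy : 'I_2 := @Ordinal 2 1 isT.

Definition xymnm (p q : nat) : 'X_{1..2} := (U_(ordx) *+ p + U_(ordy) *+ q)%MM.

Lemma xymonE (K : fieldType) p q : xymon K p q = 'X_[xymnm p q].
Proof. by rewrite /xymon /varx /vary !mpolyXn -mpolyXD. Qed.

Lemma xymnm_x p q : xymnm p q ordx = p.
Proof. by rewrite /xymnm mnmDE !mulmnE !mnm1E /= mul1n mul0n addn0. Qed.

Lemma xymnm_y p q : xymnm p q ordy = q.
Proof. by rewrite /xymnm mnmDE !mulmnE !mnm1E /= mul1n mul0n. Qed.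

Lemma sorted_gtn_nth_last (s : seq nat) i :
  sorted gtn s -> (i < (size s).-1)%N -> (nth 0 s (size s).-1 < nth 0 s i)%N.
Proof.
have gtn_trans : transitive gtn by move=> y x z /= ? ?; apply: ltn_trans; eassumption.
by move=> s_gt lt_i; apply: (sorted_ltn_nth gtn_trans 0 s_gt); rewrite ?inE //; lia.
Qed.

Lemma sorted_ltn_nth_head (s : seq nat) i :
  sorted ltn s -> (0 < i < size s)%N -> (nth 0 s 0 < nth 0 s i)%N.
Proof.
have ltn_trans' : transitive ltn by move=> y x z; apply: ltn_trans.
by move=> s_lt /andP [i_gt0 lt_i]; apply: (sorted_ltn_nth ltn_trans' 0 s_lt);
  rewrite ?inE //; lia.
Qed.

Theorem corollary5p4 (K : fieldType) (a b : seq nat) :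
  admissible a b ->
  let m := size a in
  let I := @mon_ideal K a b in
  ((0 < nth 0 a m.-1)%N ->
     forall k, (1 <= k)%N ->
       is_vnumber (ideal_pow I k) (@px K) (k * (nth 0 a m.-1 + nth 0 b m.-1) - 1)) /\
  ((0 < nth 0 b 0)%N ->
     forall k, (1 <= k)%N ->
       is_vnumber (ideal_pow I k) (@py K) (k * (nth 0 a 0 + nth 0 b 0) - 1)).
Proof.
move=> [size_a_gt0 [size_ab [a_gt b_lt]]] m I; split=> [am_gt0 k|b0_gt0 k].
- apply: (@vnumber_ideal_pow K ordx ordy isT _ _ _ (xymnm (nth 0 a m.-1) (nth 0 b m.-1)));
    rewrite ?xymnm_x ?xymnm_y //; last by exists m.-1; [lia | rewrite xymonE].
  move=> g [i lt_i ->]; rewrite xymonE; apply/supp_lex_aboveX.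
  rewrite /lex_above !xymnm_x !xymnm_y !mul1n.
  have [lt_last | <-] : (i < m.-1)%N \/ m.-1 = i by lia.
    by rewrite sorted_gtn_nth_last.
  by rewrite eqxx leqnn orbT.
- rewrite addnC.
  apply: (@vnumber_ideal_pow K ordy ordx isT _ _ _ (xymnm (nth 0 a 0) (nth 0 b 0)));
    rewrite ?xymnm_x ?xymnm_y //; last by exists 0%N; [lia | rewrite xymonE].
  move=> g [i lt_i ->]; rewrite xymonE; apply/supp_lex_aboveX.
  rewrite /lex_above !xymnm_x !xymnm_y !mul1n.
  have [i_gt0 | ->] : (0 < i)%N \/ i = 0%N by lia.
    by rewrite sorted_ltn_nth_head // i_gt0 -size_ab.
  by rewrite eqxx !leqnn orbT.
Qed.
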